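(* Fix any integer $d\geq 3$, any prime power $q$, any group $\Gamma$, and a set $S\subseteq[d-1]$ with $|S|\geq 2$. Let $s$ be any face of $\mathcal{B}^{d,S}_q$ of co-dimension at least $3$. Then the $1$-cohomology of the link $\mathcal{B}^{d,S}_{q,s}$ with respect to $\Gamma$ is trivial; that is, every $f\in C^1(\mathcal{B}^{d,S}_{q,s},\Gamma)$ with $\delta f\equiv\mathrm{id}$ is of the form $f=\delta g$ for some $g:\mathcal{B}^{d,S}_{q,s}(0)\to\Gamma$.
   Context: For $S=\{s_1<\dots<s_m\}\subseteq[d-1]$, $\mathcal{B}^{d,S}_q$ is the simplicial complex whose vertices are the subspaces of $\mathbb{F}_q^d$ with dimension in $S$ and whose top faces are the chains $W_1\subset\cdots\subset W_m$ with $\dim W_i=s_i$ (faces are subsets of top faces). The co-dimension of a face $s$ is $|S|-|s|$, and $\mathcal{B}^{d,S}_{q,s}=\{t\setminus s: t\supseteq s\}$ is its link. $C^1(X,\Gamma)$ is the set of functions $f$ on ordered edges $(u,v)$ of $X$ with $f(u,v)=f(v,u)^{-1}$; $\delta f(u,v,w)=f(u,v)f(v,w)f(w,u)$ on triangles; $\delta g(u,v)=g(u)g(v)^{-1}$ for $g$ on vertices. *)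

From HB Require Import structures.
From mathcomp Require Import all_boot all_order all_algebra all_field.
From mathcomp Require Import monoid.
Set Implicit Arguments. Unset Strict Implicit. Unset Printing Implicit Defensive.

(* Vertices of B^{d,S}_q : subspaces of F^d (F a finite field with q elements)
   whose dimension lies in S.  A face is a finite set of vertices (given as a
   duplicate-free list) contained in a chain W_1 < ... < W_m with dim W_i = s_i,
   i.e. a set of vertices pairwise comparable under inclusion. *)

Section Building.
Variables (F : finFieldType) (d : nat) (S : seq nat).

Definition vtx := {vspace 'rV[F]_d}.

Definition is_vertex (U : vtx) : bool := \dim U \in S.

Definition is_face (s : seq vtx) : bool :=
  [&& uniq s, all is_vertex s &
      all (fun U => all (fun W => (U <= W)%VS || (W <= U)%VS) s) s].

Definition codim (s : seq vtx) : nat := size S - size s.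

(* the link B^{d,S}_{q,s} = { t \ s : t face, t ⊇ s } *)
Definition link_vertex (s : seq vtx) (u : vtx) : Prop :=
  u \notin s /\ is_face (u :: s).
Definition link_edge (s : seq vtx) (u v : vtx) : Prop :=
  u \notin s /\ v \notin s /\ is_face (u :: v :: s).
Definition link_triangle (s : seq vtx) (u v w : vtx) : Prop :=
  [/\ u \notin s, v \notin s, w \notin s & is_face (u :: v :: w :: s)].
End Building.

Local Open Scope group_scope.

Definition is_cochain1 {V : Type} {G : groupType}
  (edge : V -> V -> Prop) (f : V -> V -> G) : Prop :=
  forall u v, edge u v -> f u v = (f v u)^-1.

Definition is_cocycle1 {V : Type} {G : groupType}
  (tri : V -> V -> V -> Prop) (f : V -> V -> G) : Prop :=
  forall u v w, tri u v w -> f u v * f v w * f w u = 1.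

Definition is_coboundary1 {V : Type} {G : groupType}
  (vert : V -> Prop) (edge : V -> V -> Prop) (f : V -> V -> G) : Prop :=
  exists g : V -> G, forall u v, edge u v -> f u v = g u * (g v)^-1.

(* The link of s is the flag complex of the subspaces U whose dimension lies in
   the set T of dimensions of S not used by s and which sit between the members
   of s next to \dim U.  Its H^1 vanishes by coning: a trivialisation extends to
   a new vertex whose link in the previous complex is connected, so it suffices
   to add the vertices in an order in which all these links are connected.
   Let a < b < c be elements of T with a = min T, c = max T, and fix a vertex X0
   of dimension a.  The vertices of dimension a, b or c are added from X0 in
   increasing order of 3 (a - \dim (U :&: X0)) + (0, 1 or 2 for a, b, c); the
   links met along the way are connected, essentially because the vertices of
   two given dimensions between two fixed subspaces span a connected graph (an
   exchange argument).
   The other dimensions, strictly between a and c, are added one at a time: a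
   new vertex is incident to a vertex of dimension a below it and to one of
   dimension c above it, and these connect its whole link. *)

From mathcomp Require Import all_boot all_order all_algebra all_field.
From mathcomp Require Import monoid.
From Stdlib Require Import Classical ClassicalEpsilon.
From mathcomp Require Import zify.
Set Implicit Arguments. Unset Strict Implicit. Unset Printing Implicit Defensive.

Section FlagComplex.
Local Open Scope group_scope.
Variables (V : Type) (G : groupType) (adj : V -> V -> Prop).
Hypothesis adj_sym : forall u v, adj u v -> adj v u.

Inductive walk_in (P : V -> Prop) (x : V) : V -> Prop :=
  | walk_nil : walk_in P x x
  | walk_rcons y z : walk_in P x y -> P z -> adj y z -> walk_in P x z.

Definition connected_in (P : V -> Prop) := forall x y, P x -> P y -> walk_in P x y.

Definition H1_trivial (P : V -> Prop) := forall f : V -> V -> G,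
  (forall u v, P u -> P v -> adj u v -> f u v = (f v u)^-1) ->
  (forall u v w, P u -> P v -> P w -> adj u v -> adj v w -> adj u w ->
     f u v * f v w * f w u = 1) ->
  exists g : V -> G, forall u v, P u -> P v -> adj u v -> f u v = g u * (g v)^-1.

Lemma walk_in_last P x y : walk_in P x y -> P x -> P y.
Proof. by elim. Qed.

Lemma walk_in_trans P x y z : walk_in P x y -> walk_in P y z -> walk_in P x z.
Proof. by move=> wxy; elim=> // y' z' _ wxy' Pz' a; apply: walk_rcons wxy' Pz' a. Qed.

Lemma walk_in_edge P x y : P y -> adj x y -> walk_in P x y.
Proof. exact: walk_rcons (walk_nil P x). Qed.

Lemma walk_in_sym P x y : walk_in P x y -> P x -> walk_in P y x.
Proof.
elim=> [|y' z w IH Pz a] Px; first exact: walk_nil.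
apply: walk_in_trans (IH Px).
by apply: walk_in_edge; [apply: walk_in_last w Px | apply: adj_sym].
Qed.

Lemma walk_in_sub (P Q : V -> Prop) x y :
  (forall z, P z -> Q z) -> walk_in P x y -> walk_in Q x y.
Proof.
move=> PQ; elim=> [|y' z _ IH Pz a]; first exact: walk_nil.
exact: walk_rcons IH (PQ _ Pz) a.
Qed.

Lemma connected_in_ext (P Q : V -> Prop) :
  (forall z, P z <-> Q z) -> connected_in P -> connected_in Q.
Proof.
move=> PQ cP x y /PQ Px /PQ Py.
by apply: walk_in_sub (cP x y Px Py) => z /PQ.
Qed.

Lemma connected_in_hub (P : V -> Prop) h : P h ->
  (forall w, P w -> [\/ w = h, adj h w | exists w', [/\ P w', adj h w' & adj w' w]]) ->
  connected_in P.
Proof.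
move=> Ph near_h.
have walk_h w : P w -> walk_in P h w.
  move=> Pw; case: (near_h w Pw) => [->|a|[w' [Pw' a1 a2]]].
  - exact: walk_nil.
  - exact: walk_in_edge.
  - exact: walk_rcons (walk_in_edge Pw' a1) Pw a2.
move=> x y Px Py; apply: walk_in_trans (walk_h y Py).
exact: walk_in_sym (walk_h x Px) Ph.
Qed.

Lemma H1_trivial_ext (P Q : V -> Prop) :
  (forall z, P z <-> Q z) -> H1_trivial P -> H1_trivial Q.
Proof.
move=> PQ HP f f_anti f_cocycle.
have [|u v w Pu Pv Pw|g Hg] := HP f.
- by move=> u v /PQ Qu /PQ Qv; apply: f_anti.
- by apply: f_cocycle; apply/PQ.
- by exists g => u v /PQ Pu /PQ Pv; apply: Hg.
Qed.

Lemma H1_trivial_discrete (P : V -> Prop) :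
  (forall u v, P u -> P v -> ~ adj u v) -> H1_trivial P.
Proof. by move=> nadj f _ _; exists (fun=> 1) => u v Pu Pv /(nadj u v Pu Pv). Qed.

(* Coning off: a new vertex v gets the value g v := f v w * g w, which does not
   depend on the neighbour w in P by the cocycle condition along a walk in the
   (connected) link of v. *)
Lemma H1_trivial_extend (P Q : V -> Prop) :
  (forall v, P v -> Q v) ->
  (forall u v, Q u -> Q v -> ~ P u -> ~ P v -> ~ adj u v) ->
  (forall v, Q v -> ~ P v -> connected_in (fun w => P w /\ adj v w)) ->
  H1_trivial P -> H1_trivial Q.
Proof.
move=> PQ new_indep link_conn HP f f_anti f_cocycle.
have [|u v w Pu Pv Pw|g Hg] := HP f.
- by move=> u v Pu Pv; apply: f_anti; apply: PQ.
- by apply: f_cocycle; apply: PQ.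
have ext v : exists x : G, (P v -> x = g v) /\
    (~ P v -> Q v -> forall w, P w -> adj v w -> x = f v w * g w).
  case: (classic (P v)) => Pv; first by exists (g v); split=> // /(_ Pv).
  case: (classic (exists w, P w /\ adj v w)) => [[w0 lw0]|nw]; last first.
    by exists 1; split=> // _ _ w Pw a; case: nw; exists w.
  exists (f v w0 * g w0); split=> // _ Qv w Pw a.
  elim: (link_conn v Qv Pv w0 w lw0 (conj Pw a)) => // y z wy IH [Pz az] ayz.
  have [Py ay] := walk_in_last wy lw0.
  have fvz : f v z = f v y * f y z.
    have := f_cocycle v y z Qv (PQ _ Py) (PQ _ Pz) ay ayz az.
    by rewrite (f_anti v z Qv (PQ _ Pz) az) => /mulg1_eq <-; rewrite invgK.
  by rewrite IH fvz (Hg y z Py Pz ayz) -!mulgA mulVg mulg1.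
have [g' g'P] : exists g' : V -> G, forall v, (P v -> g' v = g v) /\
    (~ P v -> Q v -> forall w, P w -> adj v w -> g' v = f v w * g w).
  exists (fun v => proj1_sig (constructive_indefinite_description _ (ext v))).
  by move=> v; exact: proj2_sig (constructive_indefinite_description _ (ext v)).
exists g' => u v Qu Qv a.
case: (classic (P u)) => Pu; case: (classic (P v)) => Pv.
- by rewrite (g'P u).1 // (g'P v).1 //; apply: Hg.
- rewrite (g'P u).1 // ((g'P v).2 Pv Qv u Pu (adj_sym a)).
  by rewrite invgM mulgA mulgV mul1g f_anti.
- by rewrite (g'P v).1 // ((g'P u).2 Pu Qu v Pv a) mulgK.
- by case: (new_indep u v Qu Qv Pu Pv a).
Qed.

End FlagComplex.

Section Subspaces.
Variables (F : finFieldType) (d : nat).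
Local Notation vt := (vtx F d).
Implicit Types U W R X L : vt.

Definition nested U W : bool := (U <= W)%VS || (W <= U)%VS.

Definition incident U W : Prop := U <> W /\ nested U W.

Lemma nestedC U W : nested U W = nested W U.
Proof. by rewrite /nested orbC. Qed.

Lemma nestedvv U : nested U U.
Proof. by rewrite /nested subvv. Qed.

Lemma incident_sym U W : incident U W -> incident W U.
Proof. by case=> neq; rewrite nestedC; split=> // eq; apply: neq. Qed.

Lemma subv_dim_eq U W : (U <= W)%VS -> \dim W <= \dim U -> U = W.
Proof. by move=> sUW leWU; apply/eqP; rewrite eqEdim sUW leWU. Qed.

Lemma nested_dim_inj U W : nested U W -> \dim U = \dim W -> U = W.
Proof.
by case/orP=> [sUW|sWU] eUW; [apply: subv_dim_eq | symmetry; apply: subv_dim_eq];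
  rewrite ?eUW.
Qed.

Lemma nested_subv U W : nested U W -> \dim U <= \dim W -> (U <= W)%VS.
Proof.
case/orP=> // sWU leUW.
by rewrite (subv_dim_eq sWU leUW) subvv.
Qed.

Lemma incident_subv U W : (U <= W)%VS -> \dim U != \dim W -> incident U W.
Proof.
by move=> sUW /eqP neq; split; [move=> eUW; apply: neq; rewrite eUW | rewrite /nested sUW].
Qed.

Lemma incident_supv U W : (W <= U)%VS -> \dim U != \dim W -> incident U W.
Proof. by rewrite eq_sym => sWU /(incident_subv sWU) /incident_sym. Qed.

Lemma nested_addv U W L : nested U L -> nested W L -> nested (U + W)%VS L.
Proof.
case/orP=> [sUL|sLU]; last by rewrite /nested (subv_trans sLU (addvSl _ _)) orbT.
case/orP=> [sWL|sLW]; first by rewrite /nested subv_add sUL sWL.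
by rewrite /nested (subv_trans sLW (addvSr _ _)) orbT.
Qed.

Lemma nested_between X U W L : nested U L -> nested W L -> ~~ (U <= W)%VS ->
  (U <= X)%VS -> (X <= U + W)%VS -> nested X L.
Proof.
move=> + + nUW sUX sXUW.
case/orP=> [sUL|sLU]; last by rewrite /nested (subv_trans sLU sUX) orbT.
case/orP=> [sWL|sLW]; first by rewrite /nested (subv_trans sXUW) // subv_add sUL sWL.
by rewrite (subv_trans sUL sLW) in nUW.
Qed.

Lemma dim_add_nested X L : nested X L -> \dim (X + L)%VS = maxn (\dim X) (\dim L).
Proof.
by case/orP=> sXL; rewrite ?(addv_idPr sXL) ?(addv_idPl sXL); have := dimvS sXL; lia.
Qed.

Lemma dim_add_line_leq U v : \dim (U + <[v]>) <= (\dim U).+1.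
Proof. by have := dimv_sum_cap U <[v]>; rewrite dim_vline; case: (v != 0%R) => /=; lia. Qed.

Lemma dim_add_line U v : v \notin U -> \dim (U + <[v]>) = (\dim U).+1.
Proof.
move=> vU; have v0 : v != 0%R by apply: contraNneq vU => ->; rewrite mem0v.
have : \dim (U :&: <[v]>) < \dim <[v]>.
  by rewrite (ltn_leqif (dimv_leqif_sup (capvSr U <[v]>))) subv_cap subvv andbT -memvE.
by have := dimv_sum_cap U <[v]>; rewrite dim_vline v0 /=; lia.
Qed.

Lemma exists_subv_between U W k : (U <= W)%VS -> \dim U <= k <= \dim W ->
  exists R, [/\ (U <= R)%VS, (R <= W)%VS & \dim R = k].
Proof.
move=> + /andP[]; move: {2}(k - \dim U) (leqnn (k - \dim U)) => n.
elim: n U => [|n IH] U gap sUW leUk lekW.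
  by exists U; split=> //; lia.
have [lekU|ltUk] := leqP k (\dim U); first by exists U; split=> //; lia.
have /subvPn[v vW vU] : ~~ (W <= U)%VS.
  by apply: contraL ltUk => /dimvS; rewrite -leqNgt; apply: leq_trans.
have sUvW : (U + <[v]> <= W)%VS by rewrite subv_add sUW -memvE.
have [||R [sUvR sRW dR]] := IH (U + <[v]>)%VS _ sUvW _ lekW;
  rewrite ?dim_add_line //; try lia.
by exists R; split=> //; apply: subv_trans sUvR; apply: addvSl.
Qed.

Lemma dim_fullv : \dim (fullv : vt) = d.
Proof. by rewrite dimvf /dim /= mul1n. Qed.

End Subspaces.

Arguments incident {F d}.

Lemma exists_notin (T : eqType) (l r : seq T) : uniq l -> size r < size l ->
  exists2 x, x \in l & x \notin r.
Proof.
move=> ul; rewrite ltnNge => /negP small.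
have /hasP[x xl xr] : has (fun x => x \notin r) l.
  by apply/hasPn=> sub; apply: small; apply: (uniq_leq_size ul) => x /sub /negPn.
by exists x.
Qed.

Section Link.
Variables (F : finFieldType) (d : nat) (S : seq nat) (s : seq (vtx F d)).
Local Notation vt := (vtx F d).
Local Notation lv := (link_vertex S s).
Implicit Types U W R P Q : vt.
Hypotheses (hs : is_face S s) (hS : all (fun i => 0 < i < d) S).

Lemma is_faceP (l : seq vt) : is_face S l <->
  [/\ uniq l, {in l, forall U, \dim U \in S} & {in l &, forall U W, nested U W}].
Proof.
split; first by case/and3P=> uq /allP dl /allP nl; split=> // U W /nl /allP; apply.
case=> uq dl nl; apply/and3P; split=> //; first exact/allP.
by apply/allP=> U Ul; apply/allP=> W Wl; apply: nl.
Qed.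

Lemma is_face_cons U (l : seq vt) : is_face S l -> U \notin l -> \dim U \in S ->
  {in l, forall W, nested U W} -> is_face S (U :: l).
Proof.
case/is_faceP=> uq dl nl Ul dU nU; apply/is_faceP; split=> [|X|X Y].
- by rewrite /= Ul.
- by rewrite inE => /predU1P[->|/dl].
rewrite !inE => /predU1P[->|Xl] /predU1P[->|Yl].
- exact: nestedvv.
- exact: nU.
- by rewrite nestedC; apply: nU.
- exact: nl.
Qed.

Lemma face_nested : {in s &, forall W W', nested W W'}.
Proof. by case/is_faceP: hs. Qed.

Lemma link_vertexP U : lv U <-> [/\ U \notin s, \dim U \in S & {in s, forall W, nested U W}].
Proof.
split=> [[Us /is_faceP[_ dUs nUs]]|[Us dU nU]]; last by split=> //; apply: is_face_cons.
split=> //; first by apply: dUs; rewrite mem_head.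
by move=> W Ws; apply: nUs; rewrite !inE ?eqxx ?Ws ?orbT.
Qed.

Lemma link_vertex_nested U : lv U -> {in s, forall W, nested U W}.
Proof. by case/link_vertexP. Qed.

Lemma link_edgeP u v : link_edge S s u v <-> [/\ lv u, lv v & incident u v].
Proof.
split=> [[us [vs /is_faceP[uq duvs nuvs]]]|[lu lvv [neq nuv]]].
  have lw w : w \in u :: v :: s -> w \notin s -> lv w.
    move=> wuvs ws; apply/link_vertexP; split=> //; first exact: duvs.
    by move=> W Ws; apply: nuvs; rewrite // !inE Ws !orbT.
  split; [exact: lw (mem_head _ _) us | by apply: lw vs; rewrite !inE eqxx orbT | split].
  - by move=> euv; move: uq; rewrite euv /= inE eqxx.
  - by apply: nuvs; rewrite !inE eqxx ?orbT.
case/link_vertexP: (lu) => us du nu; case: (lvv) => vs fvs.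
split=> //; split=> //; apply: is_face_cons => //.
  by rewrite inE negb_or us andbT; apply/eqP.
by move=> W; rewrite inE => /predU1P[->|/nu].
Qed.

Lemma link_triangle_of u v w : lv u -> lv v -> lv w ->
  incident u v -> incident v w -> incident u w -> link_triangle S s u v w.
Proof.
move=> lu lvv lw [neuv nuv] [nevw nvw] [neuw nuw].
case/link_vertexP: (lu) => us du nu; case/link_vertexP: (lvv) => vs dv nv.
case: (lw) => ws fws; split=> //.
have fvws : is_face S (v :: w :: s).
  apply: is_face_cons => //; first by rewrite inE negb_or vs andbT; apply/eqP.
  by move=> W; rewrite inE => /predU1P[->|/nv].
apply: is_face_cons => //.
  by rewrite !inE !negb_or us andbT; apply/andP; split; apply/eqP.
by move=> W; rewrite !inE => /predU1P[->|/predU1P[->|/nu]].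
Qed.

Definition free_dims := [seq t <- S | t \notin [seq \dim W | W <- s]].

Lemma free_dim_bounds t : t \in free_dims -> 0 < t < d.
Proof. by rewrite mem_filter => /andP[_]; apply: (allP hS). Qed.

Lemma size_free_dims : uniq S -> size free_dims = codim S s.
Proof.
move=> uqS; case/is_faceP: hs => _ dS nS.
have uq_dims : uniq [seq \dim W | W <- s].
  rewrite map_inj_in_uniq; first by case/is_faceP: hs.
  by move=> W W' Ws W's; apply: nested_dim_inj; apply: nS.
have used : count (mem [seq \dim W | W <- s]) S = size s.
  rewrite -size_filter -(size_map (fun W : vt => \dim W) s); apply: perm_size.
  apply: uniq_perm; rewrite ?filter_uniq // => t; rewrite mem_filter andb_idr //.
  by case/mapP=> W Ws ->; apply: dS.
by rewrite /codim -used -(count_predC (mem [seq \dim W | W <- s]) S) addKn size_filter.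
Qed.

Lemma link_vertex_free_dim U : lv U -> \dim U \in free_dims.
Proof.
case/link_vertexP=> Us dU nU; rewrite mem_filter dU andbT.
apply/mapP=> -[W Ws eUW]; move/negP: Us; apply.
by rewrite (nested_dim_inj (nU W Ws) eUW).
Qed.

Definition lower t : vt := (\sum_(W <- s | \dim W < t) W)%VS.

Definition upper t : vt := (\bigcap_(W <- s | t < \dim W) W)%VS.

Lemma lower_spec t : lower t = 0%VS \/ lower t \in s /\ \dim (lower t) < t.
Proof.
rewrite /lower big_seq_cond.
apply: (big_ind (fun X : vt => X = 0%VS \/ X \in s /\ \dim X < t)) => [|X Y|W /andP[]];
  [by left | | by right].
case=> [->|[Xs dX]]; first by rewrite add0v.
case=> [->|[Ys dY]]; first by rewrite addv0; right.
by case/orP: (face_nested Xs Ys) => [/addv_idPr|/addv_idPl] ->; right.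
Qed.

Lemma upper_spec t : upper t = fullv \/ upper t \in s /\ t < \dim (upper t).
Proof.
rewrite /upper big_seq_cond.
apply: (big_ind (fun X : vt => X = fullv \/ X \in s /\ t < \dim X)) => [|X Y|W /andP[]];
  [by left | | by right].
case=> [->|[Xs dX]]; first by rewrite capfv.
case=> [->|[Ys dY]]; first by rewrite capvf; right.
by case/orP: (face_nested Xs Ys) => [/capv_idPl|/capv_idPr] ->; right.
Qed.

Lemma dim_lower t : 0 < t -> \dim (lower t) < t.
Proof. by case: (lower_spec t) => [->|[]//]; rewrite dimv0. Qed.

Lemma dim_upper t : t < d -> t < \dim (upper t).
Proof. by case: (upper_spec t) => [->|[]//]; rewrite dim_fullv. Qed.

Lemma nested_lower t U : {in s, forall W, nested U W} -> nested U (lower t).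
Proof.
by move=> nU; case: (lower_spec t) => [->|[ls _]]; [rewrite /nested sub0v orbT | apply: nU].
Qed.

Lemma nested_upper t U : {in s, forall W, nested U W} -> nested U (upper t).
Proof.
by move=> nU; case: (upper_spec t) => [->|[us _]]; [rewrite /nested subvf | apply: nU].
Qed.

Lemma subv_lower t W : W \in s -> \dim W < t -> (W <= lower t)%VS.
Proof. by move=> Ws dW; rewrite /lower (big_rem W Ws) dW addvSl. Qed.

Lemma upper_subv t W : W \in s -> t < \dim W -> (upper t <= W)%VS.
Proof. by move=> Ws dW; rewrite /upper (big_rem W Ws) dW capvSl. Qed.

Lemma lower_subv t U : {in s, forall W, nested U W} -> t <= \dim U -> (lower t <= U)%VS.
Proof.
move=> nU tU; rewrite /lower big_seq_cond.
apply: (big_ind (fun X : vt => X <= U)%VS) => [|X Y|W /andP[Ws dW]].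
- exact: sub0v.
- by move=> sX sY; rewrite subv_add sX.
by apply: nested_subv; [rewrite nestedC; apply: nU | lia].
Qed.

Lemma subv_upper t U : {in s, forall W, nested U W} -> \dim U <= t -> (U <= upper t)%VS.
Proof.
move=> nU Ut; rewrite /upper big_seq_cond.
apply: (big_ind (fun X : vt => U <= X)%VS) => [|X Y|W /andP[Ws dW]].
- exact: subvf.
- by move=> sX sY; rewrite subv_cap sX.
by apply: nested_subv (nU W Ws) _; lia.
Qed.

Lemma lower_upper t : (lower t <= upper t)%VS.
Proof.
case: (upper_spec t) => [->|[us dus]]; first exact: subvf.
by apply: lower_subv (ltnW dus) => W; apply: face_nested.
Qed.

Lemma upper_mono p q : p <= q -> (upper p <= upper q)%VS.
Proof.
case: (upper_spec q) => [-> _|[us dq] pq]; first exact: subvf.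
by apply: upper_subv; rewrite // (leq_ltn_trans pq).
Qed.

Lemma link_vertex_between t R : t \in free_dims -> \dim R = t ->
  (lower t <= R)%VS -> (R <= upper t)%VS -> lv R.
Proof.
move=> tT dR sLR sRU; move: (tT); rewrite mem_filter => /andP[tfree tS].
have dW W : W \in s -> \dim W != t.
  by move=> Ws; apply: contraNneq tfree => <-; apply: map_f.
apply/link_vertexP; split; [by apply/negP=> /dW; rewrite dR eqxx | by rewrite dR | move=> W Ws].
rewrite /nested; case: (ltngtP (\dim W) t) => [dWt|tdW|/eqP]; last by rewrite (negbTE (dW W Ws)).
  by rewrite (subv_trans (subv_lower Ws dWt) sLR) orbT.
by rewrite (subv_trans sRU (upper_subv Ws tdW)).
Qed.

Lemma exists_link_vertex t P Q : t \in free_dims -> (P <= Q)%VS ->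
  (P <= upper t)%VS -> (lower t <= Q)%VS ->
  \dim (P + lower t) <= t -> t <= \dim (Q :&: upper t) ->
  exists R, [/\ lv R, \dim R = t, (P <= R)%VS & (R <= Q)%VS].
Proof.
move=> tT sPQ sPU sLQ dPL dQU.
have sPLQU : (P + lower t <= Q :&: upper t)%VS.
  by rewrite subv_add !subv_cap sPQ sPU sLQ lower_upper.
have [|R [sPLR sRQU dR]] := exists_subv_between (k := t) sPLQU; first by rewrite dPL dQU.
have [sPR sLR] : (P <= R)%VS /\ (lower t <= R)%VS by apply/andP; rewrite -subv_add.
have [sRQ sRU] : (R <= Q)%VS /\ (R <= upper t)%VS by apply/andP; rewrite -subv_cap.
by exists R; split=> //; apply: link_vertex_between tT dR sLR sRU.
Qed.

Lemma dim_capv_upper t U : {in s, forall W, nested U W} -> t < d -> t <= \dim U ->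
  t <= \dim (U :&: upper t).
Proof.
move=> nU td tU; case/orP: (nested_upper t nU) => [/capv_idPl|/capv_idPr] -> //.
exact: ltnW (dim_upper td).
Qed.

Lemma exists_link_vertex_sup t P : t \in free_dims -> (P <= upper t)%VS ->
  \dim (P + lower t) <= t -> exists R, [/\ lv R, \dim R = t & (P <= R)%VS].
Proof.
move=> tT sPU dPL; have /andP[_ td] := free_dim_bounds tT.
have [|R [lR dR sPR _]] := exists_link_vertex tT (subvf P) sPU (subvf _) dPL.
  by rewrite capfv; apply: ltnW; apply: dim_upper.
by exists R.
Qed.

Lemma exists_link_vertex_dim t : t \in free_dims -> exists R, lv R /\ \dim R = t.
Proof.
move=> tT; have /andP[t0 _] := free_dim_bounds tT.
have [|R [lR dR _]] := exists_link_vertex_sup tT (lower_upper t); last by exists R.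
by rewrite addvv ltnW // dim_lower.
Qed.

Lemma exists_link_vertex_below t U : t \in free_dims -> lv U -> t <= \dim U ->
  exists R, [/\ lv R, \dim R = t & (R <= U)%VS].
Proof.
move=> tT lU tU; have /andP[t0 td] := free_dim_bounds tT; have nU := link_vertex_nested lU.
have sLU := lower_subv nU tU.
have [|R [lR dR _ sRU]] :=
  exists_link_vertex tT sLU (lower_upper t) sLU _ (dim_capv_upper nU td tU).
  by rewrite addvv ltnW // dim_lower.
by exists R.
Qed.

Lemma exists_link_vertex_above t U : t \in free_dims -> lv U -> \dim U <= t ->
  exists R, [/\ lv R, \dim R = t & (U <= R)%VS].
Proof.
move=> tT lU Ut; have /andP[t0 _] := free_dim_bounds tT; have nU := link_vertex_nested lU.
apply: exists_link_vertex_sup tT (subv_upper nU Ut) _.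
by rewrite dim_add_nested ?nested_lower // geq_max Ut ltnW // dim_lower.
Qed.

Section Interval.
Variables (p q : nat) (P Q : vt).
Hypotheses (pq : p < q) (pT : p \in free_dims) (qT : q \in free_dims)
  (sPU : (P <= upper p)%VS) (sLQ : (lower q <= Q)%VS)
  (dPL : \dim (P + lower p) <= p) (dQU : q <= \dim (Q :&: upper q)).

Definition interval_vertex R :=
  [/\ lv R, \dim R = p \/ \dim R = q, (P <= R)%VS & (R <= Q)%VS].

Lemma interval_vertex_near_low R : interval_vertex R ->
  exists R', [/\ interval_vertex R', \dim R' = p & R' = R \/ incident R R'].
Proof.
case=> lR [dR|dR] sPR sRQ; first by exists R; split=> //; [split=> //; left | left].
have pR : p <= \dim R by rewrite dR ltnW.
have /andP[_ pd] := free_dim_bounds pT.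
have [R' [lR' dR' sPR' sR'R]] := exists_link_vertex pT sPR sPU
  (lower_subv (link_vertex_nested lR) pR) dPL (dim_capv_upper (link_vertex_nested lR) pd pR).
exists R'; split=> //; first by split=> //; [left | apply: subv_trans sR'R sRQ].
by right; apply: incident_supv => //; rewrite dR dR' gtn_eqF.
Qed.

(* Two low vertices whose sum has dimension p + 1 share a high neighbour. *)
Lemma interval_walk_close R1 R2 : interval_vertex R1 -> interval_vertex R2 ->
  \dim R1 = p -> \dim R2 = p -> \dim (R1 + R2) <= p.+1 ->
  walk_in incident interval_vertex R1 R2.
Proof.
move=> [lR1 _ sPR1 sR1Q] [lR2 _ sPR2 sR2Q] d1 d2 d12.
have /andP[_ pd] := free_dim_bounds pT.
have sRU : (R1 + R2 <= upper q)%VS.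
  rewrite subv_add !(subv_trans _ (upper_mono (ltnW pq))) //;
  by apply: subv_upper; rewrite ?d1 ?d2 //; apply: link_vertex_nested.
have dRL : \dim (R1 + R2 + lower q) <= q.
  rewrite dim_add_nested; last first.
    by apply: nested_addv; apply: nested_lower; apply: link_vertex_nested.
  rewrite geq_max (leq_trans d12 pq) ltnW // dim_lower //.
  by have /andP[] := free_dim_bounds qT.
have sRQ : (R1 + R2 <= Q)%VS by rewrite subv_add sR1Q.
have [Y [lY dY sY sYQ]] := exists_link_vertex qT sRQ sRU sLQ dRL dQU.
have [sR1Y sR2Y] : (R1 <= Y)%VS /\ (R2 <= Y)%VS by apply/andP; rewrite -subv_add.
have IY : interval_vertex Y by split=> //; [right | apply: subv_trans sR1Y].
have ne_pq : p != q by rewrite ltn_eqF.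
apply: (walk_rcons (walk_in_edge IY (incident_subv sR1Y _))); first by rewrite d1 dY.
  by split=> //; left.
by apply: incident_supv; rewrite // dY d2 eq_sym.
Qed.

Lemma interval_exchange R1 R2 : interval_vertex R1 -> interval_vertex R2 ->
  \dim R1 = p -> \dim R2 = p -> R1 != R2 ->
  exists R3, [/\ interval_vertex R3, \dim R3 = p,
    \dim (R1 :&: R2) < \dim (R3 :&: R2) & walk_in incident interval_vertex R1 R3].
Proof.
move=> I1 I2 d1 d2 neq; case: (I1) (I2) => lR1 _ sPR1 sR1Q [lR2 _ sPR2 sR2Q].
have /subvPn[v vR2 vR1] : ~~ (R2 <= R1)%VS.
  by apply: contra neq => sR21; rewrite (subv_dim_eq sR21) ?d1 ?d2.
have vR2' : (<[v]> <= R2)%VS by rewrite -memvE.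
have vD : v \notin (R1 :&: R2)%VS by rewrite memv_cap negb_and vR1.
have dDv : \dim (R1 :&: R2 + <[v]>) <= p.
  by rewrite -d2 dimvS // subv_add capvSr.
rewrite dim_add_line // in dDv.
have [|Z [sDZ sZR1 dZ]] := exists_subv_between (capvSl R1 R2) (k := p.-1).
  by rewrite d1; clear -dDv; lia.
have vZ : v \notin Z by apply: contra vR1; apply: subvP.
set R3 := (Z + <[v]>)%VS.
have dR3 : \dim R3 = p by rewrite dim_add_line // dZ; clear -dDv; lia.
have sDR3 : (R1 :&: R2 <= R3)%VS by apply: subv_trans sDZ (addvSl _ _).
have sR3Q : (R3 <= Q)%VS by rewrite subv_add (subv_trans sZR1 sR1Q) (subv_trans vR2' sR2Q).
have lR3 : lv R3.
  apply: link_vertex_between pT dR3 _ _.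
    apply: subv_trans sDR3; rewrite subv_cap.
    by rewrite !(lower_subv (link_vertex_nested _)) ?d1 ?d2.
  rewrite subv_add (subv_trans sZR1) ?(subv_trans vR2') //;
  by apply: subv_upper (link_vertex_nested _) _; rewrite ?d1 ?d2.
have I3 : interval_vertex R3.
  by split=> //; [left | apply: subv_trans sDR3; rewrite subv_cap sPR1].
exists R3; split=> //.
  rewrite -ltnS -(dim_add_line vD); apply: dimvS.
  by rewrite subv_add subv_cap sDR3 capvSr subv_cap vR2' andbT addvSr.
apply: interval_walk_close => //; rewrite -d1.
apply: leq_trans (dim_add_line_leq R1 v); apply: dimvS.
by rewrite subv_add addvSl subv_add (subv_trans sZR1 (addvSl _ _)) addvSr.
Qed.

Lemma interval_walk_low n R1 R2 : p - \dim (R1 :&: R2) <= n ->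
  interval_vertex R1 -> interval_vertex R2 -> \dim R1 = p -> \dim R2 = p ->
  walk_in incident interval_vertex R1 R2.
Proof.
elim: n R1 => [|n IH] R1 gap I1 I2 d1 d2.
all: have [->|neq] := eqVneq R1 R2; first exact: walk_nil.
all: have [R3 [I3 d3 lt13 w13]] := interval_exchange I1 I2 d1 d2 neq.
  by have := dimvS (capvSr R3 R2); rewrite d2; clear -gap lt13; lia.
by apply: walk_in_trans w13 (IH R3 _ I3 I2 d3 d2); clear -gap lt13; lia.
Qed.

Lemma interval_connected : connected_in incident interval_vertex.
Proof.
move=> x y Ix Iy.
have [x' [Ix' dx' ex]] := interval_vertex_near_low Ix.
have [y' [Iy' dy' ey]] := interval_vertex_near_low Iy.
have wxx' : walk_in incident interval_vertex x x'.
  by case: ex => [->|ixx']; [apply: walk_nil | apply: walk_in_edge].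
have wy'y : walk_in incident interval_vertex y' y.
  by case: ey => [->|iyy']; [apply: walk_nil | apply: walk_in_edge => //; apply: incident_sym].
exact: walk_in_trans wxx' (walk_in_trans (interval_walk_low (leqnn _) Ix' Iy' dx' dy') wy'y).
Qed.

End Interval.

Section ThreeLayers.
Variables (a b c : nat) (X0 : vt).
Hypotheses (aT : a \in free_dims) (bT : b \in free_dims) (cT : c \in free_dims)
  (ab : a < b) (bc : b < c) (lX0 : lv X0) (dX0 : \dim X0 = a).

Definition three_layer U := lv U /\ [\/ \dim U = a, \dim U = b | \dim U = c].

Definition tier U := \dim (U :&: X0).

Definition layer U := if \dim U == a then 0 else if \dim U == b then 1 else 2.

Definition key U := 3 * (a - tier U) + layer U.

Definition key_le k U := three_layer U /\ key U <= k.

Definition key_link k v w := key_le k w /\ incident v w.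

Lemma tier_le U : tier U <= a.
Proof. by rewrite /tier -dX0 dimvS // capvSr. Qed.

Lemma tier_mono U W : (U <= W)%VS -> tier U <= tier W.
Proof. by move=> sUW; rewrite /tier dimvS // capvS. Qed.

Lemma tier_eq U W : (U <= W)%VS -> tier W <= tier U -> (W :&: X0 <= U)%VS.
Proof.
move=> sUW le; rewrite -(subv_dim_eq (capvS sUW (subvv X0)) le); exact: capvSl.
Qed.

Lemma tier_full U : a <= tier U -> (X0 <= U)%VS.
Proof.
by move=> le; rewrite -(subv_dim_eq (capvSr U X0)) ?dX0 // capvSl.
Qed.

Lemma tier_add_line U R x : x \in X0 -> x \notin U -> (U + <[x]> <= R)%VS ->
  tier U < tier R.
Proof.
move=> xX xU sR; rewrite /tier -(dim_add_line (v := x)); last first.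
  by apply: contra xU; apply: subvP; apply: capvSl.
apply: dimvS; rewrite subv_add (capvS (subv_trans (addvSl _ _) sR) (subvv _)) subv_cap.
by rewrite (subv_trans (addvSr _ _) sR) -memvE.
Qed.

Lemma layer_a U : \dim U = a -> layer U = 0.
Proof. by rewrite /layer => ->; rewrite eqxx. Qed.

Lemma layer_b U : \dim U = b -> layer U = 1.
Proof. by rewrite /layer => ->; rewrite eqxx gtn_eqF. Qed.

Lemma layer_c U : \dim U = c -> layer U = 2.
Proof. by rewrite /layer => ->; rewrite !gtn_eqF // (ltn_trans ab). Qed.

Lemma layer_le U : layer U <= 2.
Proof. by rewrite /layer; case: ifP => //; case: ifP. Qed.

Lemma three_layer_dim U W : three_layer U -> three_layer W ->
  layer U = layer W -> \dim U = \dim W.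
Proof.
case=> _ [] dU [_ []] dW;
  by rewrite ?(layer_a dU) ?(layer_b dU) ?(layer_c dU) ?(layer_a dW) ?(layer_b dW)
    ?(layer_c dW) ?dU ?dW.
Qed.

Lemma three_layer_dim_bounds U : three_layer U -> a <= \dim U <= c.
Proof.
have ac : a < c := ltn_trans ab bc.
by case=> _ [] ->; rewrite ?leqnn ?(ltnW ab) ?(ltnW bc) ?(ltnW ac).
Qed.

Lemma key_eq_layer U W : key U = key W -> layer U = layer W.
Proof.
rewrite /key => e; have := layer_le U; have := layer_le W; clear -e; lia.
Qed.

Lemma key_le_max U : key U <= 3 * a + 2.
Proof. by rewrite /key; have := layer_le U; clear; lia. Qed.

Lemma X0_upper t : a <= t -> (X0 <= upper t)%VS.
Proof. by move=> at_; apply: subv_upper (link_vertex_nested lX0) _; rewrite dX0. Qed.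

Lemma lower_capv_X0 U : lv U -> a <= \dim U -> (lower a <= U :&: X0)%VS.
Proof.
move=> lU aU; rewrite subv_cap !(lower_subv (link_vertex_nested _)) //.
by rewrite dX0.
Qed.

Lemma dim_add_lower_between t v P : lv v -> ~~ (v <= X0)%VS ->
  (v <= P)%VS -> (P <= v + X0)%VS -> \dim (P + lower t) = maxn (\dim P) (\dim (lower t)).
Proof.
move=> lv_ vX0 svP sPv; apply: dim_add_nested; apply: nested_between vX0 svP sPv;
by apply: nested_lower; apply: link_vertex_nested.
Qed.

Lemma exists_top_above v P : lv v -> \dim v <= c -> ~~ (v <= X0)%VS ->
  (v <= P)%VS -> (P <= v + X0)%VS -> \dim P <= c ->
  exists Y, [/\ lv Y, \dim Y = c & (P <= Y)%VS].
Proof.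
move=> lv_ vc vX0 svP sPv Pc; apply: exists_link_vertex_sup cT _ _.
  apply: subv_trans sPv _; rewrite subv_add X0_upper ?(ltnW (ltn_trans ab bc)) // andbT.
  exact: subv_upper (link_vertex_nested lv_) vc.
rewrite (dim_add_lower_between _ lv_ vX0 svP sPv) geq_max Pc ltnW // dim_lower //.
by have /andP[] := free_dim_bounds cT.
Qed.

Lemma capv_X0_upper U : (U :&: X0 <= upper a)%VS.
Proof. exact: subv_trans (capvSr _ _) (X0_upper (leqnn a)). Qed.

Lemma dim_capv_X0_add_lower U : lv U -> a <= \dim U -> \dim (U :&: X0 + lower a) <= a.
Proof. by move=> lU aU; rewrite (addv_idPl (lower_capv_X0 lU aU)) -dX0 dimvS ?capvSr. Qed.

Lemma tier_between U W : (U :&: X0 <= W)%VS -> (W <= U)%VS -> tier W = tier U.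
Proof.
by move=> sUW sWU; apply/eqP; rewrite eqn_leq tier_mono //= /tier dimvS // subv_cap sUW capvSr.
Qed.

Section Top.
Variables (v : vt) (k : nat).
Hypotheses (lv_ : lv v) (dv : \dim v = c) (kv : key v = k.+1).

Lemma key_link_connected_top : connected_in incident (key_link k v).
Proof.
have kv' : 3 * (a - tier v) + 2 = k.+1 by rewrite -kv /key (layer_c dv).
have [av bv] : a <= \dim v /\ b <= \dim v.
  by rewrite dv; split; apply: ltnW => //; apply: ltn_trans ab bc.
have nv := link_vertex_nested lv_; have /andP[_ bd] := free_dim_bounds bT.
have conn := interval_connected ab aT bT (capv_X0_upper v) (lower_subv nv bv)
  (dim_capv_X0_add_lower lv_ av) (dim_capv_upper nv bd bv).
apply: connected_in_ext conn => w; split.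
  case=> lw dw sPw swv.
  have tw := tier_between sPw swv.
  have lw1 : layer w <= 1 by case: dw => dw; rewrite ?(layer_a dw) ?(layer_b dw).
  split; last first.
    by apply: incident_supv swv _; rewrite dv; case: dw => ->; rewrite gtn_eqF // (ltn_trans ab).
  split; first by split=> //; case: dw => dw; [apply: Or31 | apply: Or32].
  by rewrite /key tw; clear -kv' lw1; lia.
case=> [[[lw dw] kw] [nvw ivw]].
have dwc : \dim w != c.
  by apply/eqP => dwc; apply: nvw; apply: nested_dim_inj ivw _; rewrite dv dwc.
have swv : (w <= v)%VS.
  apply: nested_subv; first by rewrite nestedC.
  by rewrite dv; case/andP: (three_layer_dim_bounds (conj lw dw)).
have tvw : tier v <= tier w.
  by move: kw; rewrite /key; have := tier_le v; have := tier_le w; clear -kv'; lia.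
split=> //; last exact: tier_eq.
by case: dw => dw; [left | right | rewrite dw eqxx in dwc].
Qed.

End Top.

Section Middle.
Variables (v : vt) (k : nat).
Hypotheses (lv_ : lv v) (dv : \dim v = b) (kv : key v = k.+1).

Lemma middle_neighbour_above x : x \in X0 -> x \notin v ->
  exists Y, [/\ key_link k v Y, \dim Y = c & (v <= Y)%VS].
Proof.
move=> xX0 xv; have ac := ltn_trans ab bc.
have [||||Y [lY dY svxY]] := @exists_top_above v (v + <[x]>)%VS lv_ _ _ (addvSl _ _).
- by rewrite dv ltnW.
- by apply: contraL ab => /dimvS; rewrite dv dX0 leqNgt.
- by rewrite subv_add addvSl (subv_trans _ (addvSr _ _)) // -memvE.
- by apply: leq_trans (dim_add_line_leq _ _) _; rewrite dv.
have svY : (v <= Y)%VS := subv_trans (addvSl _ _) svxY.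
have tY := tier_add_line xX0 xv svxY.
exists Y; split=> //; split; last by apply: incident_subv; rewrite // dv dY ltn_eqF.
split; first by split; [|apply: Or33].
move: kv; rewrite /key (layer_b dv) (layer_c dY); have := tier_le Y.
by clear -tY; lia.
Qed.

Lemma key_link_connected_mid : connected_in incident (key_link k v).
Proof.
have [ac nv] := (ltn_trans ab bc, link_vertex_nested lv_).
have av : a <= \dim v by rewrite dv ltnW.
have /andP[_ ad] := free_dim_bounds aT.
have [Xv [lXv dXv sXv sXvv]] := exists_link_vertex aT (capvSl v X0) (capv_X0_upper v)
  (lower_subv nv av) (dim_capv_X0_add_lower lv_ av) (dim_capv_upper nv ad av).
have hub : key_link k v Xv.
  split; last by apply: incident_supv; rewrite // dv dXv gtn_eqF.
  split; first by split; [|apply: Or31].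
  move: kv; rewrite /key (layer_a dXv) (layer_b dv) (tier_between sXv sXvv).
  by clear; lia.
apply: (connected_in_hub (@incident_sym F d) hub) => w [[[lw [] dw] kw] [nvw ivw]].
- have swv : (w <= v)%VS by apply: nested_subv; rewrite 1?nestedC // dw dv ltnW.
  have tvw : tier v <= tier w.
    move: kw kv; rewrite /key (layer_a dw) (layer_b dv); have := tier_le v.
    by have := tier_le w; clear; lia.
  have sPw := tier_eq swv tvw.
  have [tva|/tier_full X0v] := ltnP (tier v) a; last first.
    have eX0 U : (X0 <= U)%VS -> \dim U = a -> U = X0.
      by move=> sXU dU; symmetry; apply: subv_dim_eq sXU _; rewrite dU dX0.
    have sX0 : (X0 <= v :&: X0)%VS by rewrite subv_cap X0v subvv.
    rewrite (eX0 w (subv_trans sX0 sPw) dw) (eX0 Xv (subv_trans sX0 sXv) dXv).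
    exact: Or31.
  have /subvPn[x xX0 xv] : ~~ (X0 <= v)%VS.
    by apply: contraL tva => /capv_idPr; rewrite /tier => ->; rewrite dX0 ltnn.
  have [Y [kY dY svY]] := middle_neighbour_above xX0 xv.
  apply: Or33; exists Y; split=> //.
  + by apply: incident_subv (subv_trans sXvv svY) _; rewrite dXv dY ltn_eqF.
  + by apply: incident_supv (subv_trans swv svY) _; rewrite dY dw gtn_eqF.
- by case: nvw; apply: nested_dim_inj ivw _; rewrite dv dw.
- have svw : (v <= w)%VS by apply: nested_subv; rewrite // dw dv ltnW.
  by apply: Or32; apply: incident_subv (subv_trans sXvv svw) _; rewrite dXv dw ltn_eqF.
Qed.

End Middle.

Section Bottom.
Variables (v : vt) (k : nat).
Hypotheses (lv_ : lv v) (dv : \dim v = a) (kv : key v = k.+1).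

Lemma tier_bottom : tier v < a.
Proof. by move: kv; rewrite /key (layer_a dv); have := tier_le v; clear; lia. Qed.

Lemma bottom_notin_X0 : ~~ (v <= X0)%VS.
Proof.
apply/negP=> svX; have evX : v = X0 by apply: subv_dim_eq svX _; rewrite dv dX0.
by move: tier_bottom; rewrite /tier evX capvv dX0 ltnn.
Qed.

Definition branch x := interval_vertex b c (v + <[x]>)%VS fullv.

Lemma branch_key_link x : x \in X0 -> x \notin v ->
  forall R, branch x R -> key_link k v R.
Proof.
move=> xX xv R [lR dR svxR _]; have tR := tier_add_line xX xv svxR.
have [ab' ac] : a != b /\ a != c by rewrite !ltn_eqF // (ltn_trans ab).
split; last first.
  by apply: incident_subv (subv_trans (addvSl _ _) svxR) _; rewrite dv; case: dR => ->.
split; first by split=> //; case: dR; [apply: Or32 | apply: Or33].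
move: kv; rewrite /key (layer_a dv); have := layer_le R; have := tier_le R.
by clear -tR; lia.
Qed.

Lemma branch_connected x : x \in X0 -> connected_in incident (branch x).
Proof.
move=> xX; have /andP[_ cd] := free_dim_bounds cT.
have sv_X0 : (v + <[x]> <= v + X0)%VS.
  by rewrite subv_add addvSl (subv_trans _ (addvSr _ _)) // -memvE.
apply: interval_connected bc bT cT _ (subvf _) _ _.
- rewrite subv_add (subv_upper (link_vertex_nested lv_)) ?dv ?(ltnW ab) //.
  by rewrite -memvE; apply: (subvP (X0_upper (ltnW ab))).
- rewrite (dim_add_lower_between _ lv_ bottom_notin_X0 (addvSl _ _) sv_X0) geq_max.
  rewrite (leq_trans (dim_add_line_leq _ _)) ?dv // ltnW // dim_lower //.
  by have /andP[] := free_dim_bounds bT.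
- by rewrite capfv ltnW // dim_upper.
Qed.

Lemma key_link_branch w : key_link k v w ->
  exists x, [/\ x \in X0, x \notin v & branch x w].
Proof.
case=> [[[lw dw] kw] [nvw ivw]].
have dwa : \dim w != a.
  by apply/eqP=> dwa; apply: nvw; apply: nested_dim_inj ivw _; rewrite dv dwa.
have svw : (v <= w)%VS.
  by apply: nested_subv ivw _; rewrite dv; case/andP: (three_layer_dim_bounds (conj lw dw)).
have tvw : tier v < tier w.
  move: kw kv; rewrite /key (layer_a dv); have := tier_le v; have := tier_le w.
  by have := layer_le w; clear; lia.
have /subvPn[x /memv_capP[xw xX] xv] : ~~ (w :&: X0 <= v)%VS.
  apply: contraL tvw => swX; rewrite -leqNgt /tier dimvS //.
  by rewrite subv_cap swX capvSr.
exists x; split=> //; split=> //; last exact: subvf.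
- by case: dw => dw; [rewrite dw eqxx in dwa | left | right].
- by rewrite subv_add svw -memvE.
Qed.

Lemma branches_meet x1 x2 : x1 \in X0 -> x2 \in X0 ->
  exists Y, branch x1 Y /\ branch x2 Y.
Proof.
move=> xX1 xX2; set P := (v + <[x1]> + <[x2]>)%VS.
have svP : (v <= P)%VS by rewrite /P -addvA addvSl.
have sPv : (P <= v + X0)%VS.
  by rewrite /P !subv_add addvSl !(subv_trans _ (addvSr _ _)) // -memvE.
have [||Y [lY dY sPY]] := exists_top_above lv_ _ bottom_notin_X0 svP sPv.
- by rewrite dv ltnW // (ltn_trans ab).
- have := dim_add_line_leq v x1; have := dim_add_line_leq (v + <[x1]>)%VS x2.
  by rewrite /P dv; clear -ab bc; lia.
exists Y; split; split; rewrite ?subvf //; try by right.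
- by apply: subv_trans sPY; apply: addvSl.
- by apply: subv_trans sPY; rewrite subv_add svP addvSr.
Qed.

Lemma key_link_connected_bot : connected_in incident (key_link k v).
Proof.
move=> w1 w2 /key_link_branch[x1 [xX1 xv1 B1]] /key_link_branch[x2 [xX2 xv2 B2]].
have [Y [Y1 Y2]] := branches_meet xX1 xX2.
apply: walk_in_trans (walk_in_sub (branch_key_link xX1 xv1) (branch_connected xX1 B1 Y1)) _.
exact: walk_in_sub (branch_key_link xX2 xv2) (branch_connected xX2 Y2 B2).
Qed.

End Bottom.

Lemma key_le0 U : key_le 0 U -> U = X0.
Proof.
case=> TU; rewrite leqn0 /key => /eqP kU.
have TX0 : three_layer X0 by split=> //; apply: Or31.
have dU : \dim U = a.
  by rewrite (three_layer_dim TU TX0) // (layer_a dX0); clear -kU; lia.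
symmetry; apply: subv_dim_eq; last by rewrite dU dX0.
by apply: tier_full; have := tier_le U; clear -kU; lia.
Qed.

Lemma key_le_H1_trivial (G : groupType) k : H1_trivial G incident (key_le k).
Proof.
elim: k => [|k IH].
  by apply: H1_trivial_discrete => u v /key_le0 -> /key_le0 -> [].
have key_new U : key_le k.+1 U -> ~ key_le k U -> key U = k.+1.
  by case=> TU kU nU; apply/eqP; rewrite eqn_leq kU ltnNge; apply/negP=> kU'; apply: nU.
apply: (@H1_trivial_extend _ _ _ (@incident_sym F d) (key_le k) (key_le k.+1) _ _ _ IH).
- by move=> U [TU kU]; split=> //; apply: leqW.
- move=> u w Qu Qw nu nw [neq nuw]; apply: neq; apply: nested_dim_inj nuw _.
  apply: three_layer_dim Qu.1 Qw.1 _; apply: key_eq_layer.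
  by rewrite (key_new u) ?(key_new w).
- move=> w Qw nw; have kw := key_new w Qw nw.
  case: Qw => -[lw [] dw] _.
  + exact: key_link_connected_bot.
  + exact: key_link_connected_mid.
  + exact: key_link_connected_top.
Qed.

Lemma three_layer_H1_trivial (G : groupType) : H1_trivial G incident three_layer.
Proof.
have all_keys U : key_le (3 * a + 2) U <-> three_layer U.
  by split=> [[]|TU] //; split=> //; apply: key_le_max.
exact: H1_trivial_ext all_keys (@key_le_H1_trivial G _).
Qed.

Hypotheses (a_min : forall t, t \in free_dims -> a <= t)
  (c_max : forall t, t \in free_dims -> t <= c).

Lemma link_connected_off_layers (P : vt -> Prop) v :
  (forall U, three_layer U -> P U) -> (forall U, P U -> lv U) ->
  lv v -> ~ three_layer v -> connected_in incident (fun w => P w /\ incident v w).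
Proof.
move=> P_three P_lv lv_ nv; have vT := link_vertex_free_dim lv_.
have [av vc] : a < \dim v /\ \dim v < c.
  rewrite !ltn_neqAle a_min ?c_max // !andbT.
  by split; apply/eqP=> e; apply: nv; split=> //; [apply: Or31 | apply: Or33].
have [X [lX dX sXv]] := exists_link_vertex_below aT lv_ (ltnW av).
have [Y [lY dY svY]] := exists_link_vertex_above cT lv_ (ltnW vc).
have hub : P X /\ incident v X.
  split; first by apply: P_three; split=> //; apply: Or31.
  by apply: incident_supv; rewrite // dX gtn_eqF.
apply: (connected_in_hub (@incident_sym F d) hub) => w [Pw [nvw ivw]].
case: (ltngtP (\dim w) (\dim v)) => [wv|vw|/esym evw]; last first.
- by case: nvw; apply: nested_dim_inj ivw evw.
- apply: Or32; apply: incident_subv (subv_trans sXv (nested_subv ivw (ltnW vw))) _.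
  by rewrite dX ltn_eqF // (ltn_trans av).
have swv : (w <= v)%VS by apply: nested_subv (ltnW wv); rewrite nestedC.
apply: Or33; exists Y; split.
- split; first by apply: P_three; split=> //; apply: Or33.
  by apply: incident_subv svY _; rewrite dY ltn_eqF.
- by apply: incident_subv (subv_trans sXv svY) _; rewrite dX dY ltn_eqF // (ltn_trans av).
- by apply: incident_supv (subv_trans swv svY) _; rewrite dY gtn_eqF // (ltn_trans wv).
Qed.

Definition layers_in (l : seq nat) U := three_layer U \/ lv U /\ \dim U \in l.

Lemma layers_in_H1_trivial (G : groupType) l : H1_trivial G incident (layers_in l).
Proof.
elim: l => [|t l IH].
  have three U : three_layer U <-> layers_in [::] U by split=> [|[|[]]]; [left | |].
  exact: H1_trivial_ext three (@three_layer_H1_trivial G).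
have new U : layers_in (t :: l) U -> ~ layers_in l U -> lv U /\ \dim U = t.
  case=> [TU nU|[lU]]; first by case: nU; left.
  by rewrite inE => /predU1P[|lU' nU] //; case: nU; right.
apply: (@H1_trivial_extend _ _ _ (@incident_sym F d) (layers_in l) _ _ _ _ IH).
- by move=> U [TU|[lU dU]]; [left | right; rewrite inE dU orbT].
- move=> u w Qu Qw nu nw [neq nuw]; apply: neq; apply: nested_dim_inj nuw _.
  by rewrite (new u Qu nu).2 (new w Qw nw).2.
- move=> v Qv nv; apply: link_connected_off_layers (new v Qv nv).1 _.
  + by move=> U TU; left.
  + by move=> U [[]|[]].
  + by move=> Tv; apply: nv; left.
Qed.

Lemma all_layers_H1_trivial (G : groupType) : H1_trivial G incident lv.
Proof.
have all_layers U : layers_in S U <-> lv U.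
  by split=> [[[]|[]]|lU] //; right; split=> //; case/link_vertexP: lU.
exact: H1_trivial_ext all_layers (@layers_in_H1_trivial G S).
Qed.

End ThreeLayers.

Lemma link_H1_trivial (G : groupType) : uniq S -> 2 < codim S s ->
  H1_trivial G incident lv.
Proof.
move=> uqS; rewrite -size_free_dims // => big.
have exT : exists t, t \in free_dims.
  by case E: free_dims big => [|t l] //; exists t; rewrite mem_head.
have ubT t : t \in free_dims -> t <= d by case/free_dim_bounds/andP=> _ /ltnW.
case: (ex_minnP exT) => a aT a_min; case: (ex_maxnP exT ubT) => c cT c_max.
have [b bT] := @exists_notin _ free_dims [:: a; c] (filter_uniq _ uqS) big.
rewrite !inE negb_or => /andP[ba bc].
have ab : a < b by rewrite ltn_neqAle eq_sym ba a_min.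
have {}bc : b < c by rewrite ltn_neqAle bc c_max.
have [X0 [lX0 dX0]] := exists_link_vertex_dim aT.
exact: all_layers_H1_trivial aT bT cT ab bc lX0 dX0 a_min c_max G.
Qed.

End Link.

Theorem lemma3p3 (d : nat) (F : finFieldType) (G : groupType) (S : seq nat)
  (hd : 3 <= d) (hSu : uniq S) (hSr : all (fun i => 0 < i < d) S)
  (hS2 : 2 <= size S)
  (s : seq (vtx F d)) (hs : is_face S s) (hcod : 3 <= codim S s)
  (f : vtx F d -> vtx F d -> G)
  (hf : is_cochain1 (link_edge S s) f)
  (hdf : is_cocycle1 (link_triangle S s) f) :
  is_coboundary1 (link_vertex S s) (link_edge S s) f.
Proof.
have [||g fg] := @link_H1_trivial F d S s hs hSr G hSu hcod f.
- by move=> u v lu lv iuv; apply: hf; apply/(link_edgeP hs).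
- by move=> u v w lu lv lw iuv ivw iuw; apply: hdf; apply: (link_triangle_of hs).
by exists g => u v /(link_edgeP hs)[lu lv iuv]; apply: fg.
Qed.
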